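(* Let $\eta=\frac{1+\sqrt5}{2}$ and $N=\mathbf{Z}[\eta]=\mathbf{Z}e_1\oplus\mathbf{Z}e_2$ with $e_1=1$, $e_2=\eta$. Let $b:N\times N\to\mathbf{Z}$ be a symmetric bilinear form such that $(N,b)$ is an even hyperbolic lattice and multiplication by $\eta^2$ is an isometry of $(N,b)$. Then: \begin{enumerate} \item The Gram matrix of $b$ with respect to $(e_1,e_2)$ has the form $\begin{pmatrix}2q&q\\ q&-2q\end{pmatrix}$ for some nonzero integer $q$. Conversely, for every nonzero integer $q$ this matrix defines an even hyperbolic lattice on $N$ for which multiplication by $\eta^2$ is an isometry. \item With $q$ as in (1), the discriminant group satisfies $N^*/N=\langle e_2/q\rangle\oplus\langle (e_1-2e_2)/(5q)\rangle\simeq \mathbf{Z}/q\mathbf{Z}\oplus\mathbf{Z}/5q\mathbf{Z}$. \item With $q$ as in (1), there is no $x\in N$ with $b(x,x)=0$. Moreover, there is no $x\in N$ with $b(x,x)=\pm2$ if and only if $q\neq\pm1$. \item With $q$ as in (1), multiplication by $\eta^6$ acts on $N^*/N$ as $-\mathrm{id}_{N^*/N}$ if and only if $q\in\{\pm1,\pm2\}$. \end{enumerate}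
   Context: A pair $(N,b)$, with $b$ a $\mathbf{Z}$-valued symmetric bilinear form on $N\cong\mathbf{Z}^2$, is an even hyperbolic lattice if $b(x,x)$ is even for all $x$ (equivalently, the diagonal entries of the Gram matrix are even) and the Gram matrix has signature $(1,1)$. In this case $b$ induces an embedding $N\subset N^*:=\mathrm{Hom}_{\mathbf{Z}}(N,\mathbf{Z})\subset N\otimes\mathbf{Q}$, and $N^*/N$ is called the discriminant group. A $\mathbf{Z}$-module automorphism $f$ of $N$ is an isometry if $b(f(x),f(y))=b(x,y)$ for all $x,y$. An isometry induces an automorphism of $N^*/N$ via its $\mathbf{Q}$-linear extension. Multiplication by $\eta^k$ is the $\mathbf{Z}$-module automorphism $p(\eta)\mapsto\eta^kp(\eta)$ of $N$. *)

From HB Require Import structures.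
From mathcomp Require Import all_boot all_order all_algebra.
Set Implicit Arguments. Unset Strict Implicit. Unset Printing Implicit Defensive.
Import Order.TTheory GRing.Theory Num.Theory.
Local Open Scope ring_scope.

(* N = Z[eta] is identified with 'cV[int]_2 via the coordinates w.r.t.
   (e1, e2) = (1, eta); N (x) Q with 'cV[rat]_2. *)

Definition bform (R : nzRingType) (G : 'M[R]_2) (x y : 'cV[R]_2) : R :=
  (x^T *m G *m y) 0 0.

Definition e1 (R : nzRingType) : 'cV[R]_2 := \col_(i < 2) (if (i : nat) == 0%N then 1 else 0).
Definition e2 (R : nzRingType) : 'cV[R]_2 := \col_(i < 2) (if (i : nat) == 1%N then 1 else 0).

(* Multiplication by eta on coordinates: eta*(a + b eta) = b + (a+b) eta,
   since eta^2 = eta + 1.  Its matrix (acting on column vectors): *)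
Definition etaM (R : nzRingType) : 'M[R]_2 :=
  \matrix_(i < 2, j < 2) (if ((i : nat) == 0%N) && ((j : nat) == 0%N) then 0 else 1).

Definition mul_eta_pow (R : nzRingType) (k : nat) (x : 'cV[R]_2) : 'cV[R]_2 :=
  (etaM R ^+ k) *m x.

Definition intQ (G : 'M[int]_2) : 'M[rat]_2 := map_mx (fun z : int => z%:~R) G.
Definition vecQ (x : 'cV[int]_2) : 'cV[rat]_2 := map_mx (fun z : int => z%:~R) x.

Definition symmetric_form (G : 'M[int]_2) : Prop := forall x y, bform G x y = bform G y x.

Definition even_form (G : 'M[int]_2) : Prop := forall x, (2 %| bform G x x)%Z.

(* signature (1,1): the Gram matrix is congruent over Q (hence over R) to a
   diagonal matrix with one positive and one negative diagonal entry *)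
Definition signature_1_1 (G : 'M[int]_2) : Prop :=
  exists (P : 'M[rat]_2) (d1 d2 : rat),
    [/\ P \in unitmx, 0 < d1, d2 < 0 &
        P^T *m intQ G *m P =
          \matrix_(i < 2, j < 2) (if i == j then (if (i : nat) == 0%N then d1 else d2) else 0)].

Definition even_hyperbolic (G : 'M[int]_2) : Prop :=
  [/\ symmetric_form G, even_form G & signature_1_1 G].

Definition is_isometry (G : 'M[int]_2) (f : 'cV[int]_2 -> 'cV[int]_2) : Prop :=
  [/\ (forall x y, f (x + y) = f x + f y), bijective f &
      forall x y, bform G (f x) (f y) = bform G x y].

Definition inN (v : 'cV[rat]_2) : Prop := exists x : 'cV[int]_2, v = vecQ x.

Definition in_dual (G : 'M[int]_2) (v : 'cV[rat]_2) : Prop :=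
  forall x : 'cV[int]_2, exists z : int, bform (intQ G) v (vecQ x) = z%:~R.

Definition gram (q : int) : 'M[int]_2 :=
  \matrix_(i < 2, j < 2)
    (if i == j then (if (i : nat) == 0%N then 2 * q else - (2 * q)) else q).

(* In the basis (1, eta), multiplication by eta^2 = eta + 1 has matrix
   [[1, 1], [1, 2]], and invariance of b under it is a linear system on the
   Gram matrix whose solutions are the multiples q [[2, 1], [1, -2]]; the
   signature only rules out q = 0.  The associated quadratic form is
   2 q N(a + b eta) with N(a + b eta) = a^2 + ab - b^2 the norm of Q(sqrt 5),
   which vanishes only at 0 because sqrt 5 is irrational, and equals +-2 only
   if q N = +-1.  The dual lattice is spanned by u = e2/q and
   w = (e1 - 2 e2)/(5q), and a u + c w = (c e1 + (5a - 2c) e2)/(5q) gives the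
   discriminant group.  Finally eta^6 + 1 = 8 eta + 6 sends u and w to
   (8 e1 + 14 e2)/q and -(2 e1 + 4 e2)/q, which lie in N for all duals
   exactly when q divides gcd(8, 14) = 2. *)
From Pilot Require Import Defs.
From HB Require Import structures.
From mathcomp Require Import all_boot all_order all_algebra.
From mathcomp Require Import ring lra zify.
Set Implicit Arguments.
Unset Strict Implicit.
Unset Printing Implicit Defensive.

Import Order.TTheory GRing.Theory Num.Theory.
Local Open Scope ring_scope.

Lemma ord2P (i : 'I_2) : i = 0 \/ i = 1.
Proof. by case: i => [[|[|//]]] ?; [left | right]; apply: val_inj. Qed.

Lemma sum_ord2 (R : nmodType) (F : 'I_2 -> R) : \sum_(i < 2) F i = F 0 + F 1.
Proof. by rewrite big_ord_recl big_ord1; congr (_ + F _); apply: val_inj. Qed.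

Definition col2 {R : nzRingType} (a b : R) : 'cV[R]_2 :=
  \col_(i < 2) (if (i : nat) == 0%N then a else b).

Definition mx2 {R : nzRingType} (a b c d : R) : 'M[R]_2 :=
  \matrix_(i < 2, j < 2)
    if (i : nat) == 0%N then (if (j : nat) == 0%N then a else b)
    else (if (j : nat) == 0%N then c else d).

Definition diag2 {R : nzRingType} (d1 d2 : R) : 'M[R]_2 :=
  \matrix_(i < 2, j < 2) (if i == j then (if (i : nat) == 0%N then d1 else d2) else 0).

Section Coordinates.
Context {R : nzRingType}.
Implicit Types (a b c d k : R) (x : 'cV[R]_2) (A B : 'M[R]_2).

Lemma col2_eta x : x = col2 (x 0 0) (x 1 0).
Proof. by apply/matrixP => i j; rewrite (ord1 j) mxE; case: (ord2P i) => ->. Qed.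

Lemma col2_inj a b c d : col2 a b = col2 c d -> a = c /\ b = d.
Proof. by move=> /matrixP E; split; [move: (E 0 0) | move: (E 1 0)]; rewrite !mxE. Qed.

Lemma col20 : 0 = col2 0 0 :> 'cV[R]_2.
Proof. by apply/matrixP => i j; rewrite !mxE; case: ifP. Qed.

Lemma col2D a b c d : col2 a b + col2 c d = col2 (a + c) (b + d).
Proof. by apply/matrixP => i j; rewrite !mxE; case: ifP. Qed.

Lemma col2N a b : - col2 a b = col2 (- a) (- b).
Proof. by apply/matrixP => i j; rewrite !mxE; case: ifP. Qed.

Lemma col2Z k a b : k *: col2 a b = col2 (k * a) (k * b).
Proof. by apply/matrixP => i j; rewrite !mxE; case: ifP. Qed.

Lemma e1E : e1 R = col2 1 0. Proof. by []. Qed.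

Lemma e2E : e2 R = col2 0 1.
Proof. by apply/matrixP => i j; rewrite !mxE; case: (ord2P i) => ->. Qed.

Lemma mx2P A B :
  A 0 0 = B 0 0 -> A 0 1 = B 0 1 -> A 1 0 = B 1 0 -> A 1 1 = B 1 1 -> A = B.
Proof. by move=> *; apply/matrixP => i j; case: (ord2P i) => ->; case: (ord2P j) => ->. Qed.

Lemma mx2_eta A : A = mx2 (A 0 0) (A 0 1) (A 1 0) (A 1 1).
Proof. by apply: mx2P; rewrite !mxE. Qed.

Lemma tr_mx2 a b c d : (mx2 a b c d)^T = mx2 a c b d.
Proof. by apply: mx2P; rewrite !mxE. Qed.

Lemma diag2E a d : diag2 a d = mx2 a 0 0 d.
Proof. by apply: mx2P; rewrite !mxE. Qed.

End Coordinates.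

Section CommutativeCoordinates.
Context {R : comNzRingType}.
Implicit Types (a b c d : R) (x y : 'cV[R]_2) (G : 'M[R]_2).

Lemma mul_mx2 a b c d a' b' c' d' :
  mx2 a b c d *m mx2 a' b' c' d' =
  mx2 (a * a' + b * c') (a * b' + b * d') (c * a' + d * c') (c * b' + d * d').
Proof. by apply: mx2P; rewrite !mxE sum_ord2 !mxE. Qed.

Lemma bform_col2 G a b c d :
  bform G (col2 a b) (col2 c d) =
  a * (G 0 0 * c + G 0 1 * d) + b * (G 1 0 * c + G 1 1 * d).
Proof. by rewrite /bform !mxE !sum_ord2 !mxE !sum_ord2 !mxE /=; ring. Qed.

Lemma bform_sym G : G 0 1 = G 1 0 -> forall x y, bform G x y = bform G y x.
Proof. by move=> G01 x y; rewrite [x]col2_eta [y]col2_eta !bform_col2 G01; ring. Qed.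

Lemma etaM_col2 a b : etaM R *m col2 a b = col2 b (a + b).
Proof. by apply/matrixP => i j; rewrite !mxE sum_ord2 !mxE; case: (ord2P i) => -> /=; ring. Qed.

Lemma mul_eta_powS k x : mul_eta_pow k.+1 x = etaM R *m mul_eta_pow k x.
Proof. by rewrite /mul_eta_pow exprS -mulmxE mulmxA. Qed.

Lemma mul_eta_pow2_col2 a b : mul_eta_pow 2 (col2 a b) = col2 (a + b) (a + 2 * b).
Proof. by rewrite !mul_eta_powS /mul_eta_pow mul1mx !etaM_col2; congr col2; ring. Qed.

Lemma mul_eta_pow6_col2 a b :
  mul_eta_pow 6 (col2 a b) = col2 (5 * a + 8 * b) (8 * a + 13 * b).
Proof. by rewrite !mul_eta_powS /mul_eta_pow mul1mx !etaM_col2; congr col2; ring. Qed.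

End CommutativeCoordinates.

Lemma vecQ_col2 (a b : int) : vecQ (col2 a b) = col2 a%:~R b%:~R.
Proof. by apply/matrixP => i j; rewrite !mxE; case: ifP. Qed.

Lemma intQ_mx2 (a b c d : int) : intQ (mx2 a b c d) = mx2 a%:~R b%:~R c%:~R d%:~R.
Proof. by apply: mx2P; rewrite !mxE. Qed.

Lemma gram_mx2 q : gram q = mx2 (2 * q) q q (- (2 * q)).
Proof. by apply: mx2P; rewrite !mxE. Qed.

Lemma gram0 : gram 0 = 0.
Proof. by apply: mx2P; rewrite !mxE. Qed.

Lemma bform_gram q (a b c d : int) :
  bform (gram q) (col2 a b) (col2 c d) = q * (a * (2 * c + d) + b * (c - 2 * d)).
Proof. by rewrite bform_col2 !mxE /=; ring. Qed.

Lemma bform_intQ_gram q (a b c d : rat) :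
  bform (intQ (gram q)) (col2 a b) (col2 c d) =
  q%:~R * (a * (2 * c + d) + b * (c - 2 * d)).
Proof. by rewrite bform_col2 !mxE /= ?intrM ?intrN; ring. Qed.

(* [symmetric_form] is qualified because mathcomp's sesquilinear library
   defines a notation with the same name. *)
Lemma gram_of_eta2_isometry (G : 'M[int]_2) :
  Defs.symmetric_form G ->
  (forall x y, bform G (mul_eta_pow 2 x) (mul_eta_pow 2 y) = bform G x y) ->
  G = gram (G 0 1).
Proof.
move=> Gsym Giso.
have := Gsym (col2 1 0) (col2 0 1).
have := Giso (col2 1 0) (col2 1 0); have := Giso (col2 1 0) (col2 0 1).
have := Giso (col2 0 1) (col2 0 1).
rewrite !mul_eta_pow2_col2 !bform_col2 gram_mx2 (mx2_eta G) !mxE /=.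
move: (G 0 0) (G 0 1) (G 1 0) (G 1 1) => a b c d *.
by apply: mx2P; rewrite !mxE /=; lia.
Qed.

Lemma signature_1_1_neq0 (G : 'M[int]_2) : signature_1_1 G -> G != 0.
Proof.
case=> P [d1 [d2 [_ d1_gt0 _ PGP]]]; apply/eqP => G0.
move: PGP; rewrite G0 /intQ map_mx0 mulmx0 mul0mx => /(congr1 (fun A : 'M_2 => A 0 0)).
by rewrite !mxE /= => d1_0; rewrite -d1_0 ltxx in d1_gt0.
Qed.

Lemma even_hyperbolic_eta2_isometry_gram (G : 'M[int]_2) :
  even_hyperbolic G -> is_isometry G (mul_eta_pow 2) ->
  exists q : int, q != 0 /\ G = gram q.
Proof.
case=> Gsym _ Gsign [_ _ Giso]; have GE := gram_of_eta2_isometry Gsym Giso.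
exists (G 0 1); split => //; apply: contra_neq (signature_1_1_neq0 Gsign) => q0.
by rewrite GE q0 gram0.
Qed.

Definition eta_norm (a b : int) : int := a * a + a * b - b * b.

Lemma bform_gram_diag q (x : 'cV[int]_2) :
  bform (gram q) x x = 2 * q * eta_norm (x 0 0) (x 1 0).
Proof. by rewrite [x]col2_eta bform_gram !mxE /eta_norm /=; ring. Qed.

Lemma gram_symmetric q : Defs.symmetric_form (gram q).
Proof. by apply: bform_sym; rewrite !mxE. Qed.

Lemma gram_even q : even_form (gram q).
Proof. by move=> x; rewrite bform_gram_diag -mulrA dvdz_mulr. Qed.

(* If d1 < 0 < d2, swapping the two basis vectors puts the diagonal in the
   order required by [signature_1_1]. *)
Lemma signature_1_1_diag (G : 'M[int]_2) (P : 'M[rat]_2) (d1 d2 : rat) :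
  P \in unitmx -> d1 * d2 < 0 -> P^T *m intQ G *m P = diag2 d1 d2 ->
  signature_1_1 G.
Proof.
move=> Punit d12_lt0 PGP; have [d1_gt0 | d1_le0] := ltP 0 d1.
  by exists P, d1, d2; split => //; rewrite -(pmulr_rlt0 _ d1_gt0).
have d1_lt0 : d1 < 0.
  by rewrite lt_neqAle d1_le0 andbT; apply: contraTneq d12_lt0 => ->; rewrite mul0r ltxx.
pose S : 'M[rat]_2 := mx2 0 1 1 0.
exists (P *m S), d2, d1; split => //.
- rewrite unitmx_mul Punit /=; apply: (proj1 (@mulmx1_unit _ _ S S _)).
  by rewrite mul_mx2; apply: mx2P; rewrite !mxE /=; ring.
- by rewrite -(nmulr_rlt0 _ d1_lt0).
- rewrite trmx_mul -!mulmxA (mulmxA P^T) (mulmxA _ P) PGP.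
  by rewrite -[RHS]/(diag2 d2 d1) !diag2E tr_mx2 !mul_mx2; congr mx2; ring.
Qed.

(* The basis (e1, e1 - 2 e2) is orthogonal, with norms 2q and -10q. *)
Lemma signature_1_1_gram q : q != 0 -> signature_1_1 (gram q).
Proof.
move=> q_neq0; have qQ_neq0 : (q%:~R : rat) != 0 by rewrite intr_eq0.
have qQ2_gt0 : 0 < (q%:~R : rat) ^+ 2 by rewrite exprn_even_gt0 ?qQ_neq0.
apply: (@signature_1_1_diag _ (mx2 1 1 0 (-2)) (2 * q%:~R) (-10 * q%:~R)).
- apply: (proj1 (@mulmx1_unit _ _ _ (mx2 1 2^-1 0 (- 2^-1)) _)).
  by rewrite mul_mx2; apply: mx2P; rewrite !mxE /=; field.
- lra.
- by rewrite gram_mx2 intQ_mx2 tr_mx2 !mul_mx2 diag2E ?intrM ?intrN; congr mx2; ring.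
Qed.

Lemma mul_eta2_isometry_gram q : is_isometry (gram q) (mul_eta_pow 2).
Proof.
split.
- by move=> x y; rewrite /mul_eta_pow mulmxDr.
- exists (fun x : 'cV[int]_2 => col2 (2 * x 0 0 - x 1 0) (x 1 0 - x 0 0)) => x;
    rewrite [x]col2_eta; move: (x 0 0) (x 1 0) => a b;
    by rewrite mul_eta_pow2_col2 !mxE /=; congr col2; ring.
- by move=> x y; rewrite [x]col2_eta [y]col2_eta !mul_eta_pow2_col2 !bform_gram; ring.
Qed.

Lemma gram_even_hyperbolic_eta2_isometry q : q != 0 ->
  even_hyperbolic (gram q) /\ is_isometry (gram q) (mul_eta_pow 2).
Proof.
move=> q_neq0; split; last exact: mul_eta2_isometry_gram.
by split; [apply: gram_symmetric | apply: gram_even | apply: signature_1_1_gram].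
Qed.

Lemma sqrn_eq_5_sqrn (c b : nat) : (c ^ 2 = 5 * b ^ 2)%N -> b = 0%N.
Proof.
move=> E; have [// | b_gt0] := posnP b.
have c_gt0 : (0 < c)%N by case: c E => //; rewrite exp0n //; nia.
have := congr1 (logn 5) E.
by rewrite lognM ?expn_gt0 ?b_gt0 // !lognX (@logn_prime 5 5 isT) eqxx; lia.
Qed.

Lemma eta_norm_eq0 (a b : int) : eta_norm a b = 0 -> a = 0 /\ b = 0.
Proof.
move=> N0; have E : (2 * a + b) ^+ 2 = 5 * b ^+ 2.
  by apply/eqP; rewrite -subr_eq0 -[X in _ == X](mulr0 4) -N0 /eta_norm; apply/eqP; ring.
have /eqP b0 : b == 0.
  rewrite -absz_eq0; apply/eqP; apply: (@sqrn_eq_5_sqrn `|2 * a + b|).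
  by rewrite -!abszX E abszM.
by move: N0; rewrite /eta_norm b0 mulr0 subr0 addr0 => /eqP; rewrite mulf_eq0 orbb => /eqP.
Qed.

Lemma gram_anisotropic q (x : 'cV[int]_2) : q != 0 -> x != 0 -> bform (gram q) x x != 0.
Proof.
move=> q_neq0; apply: contraNN; rewrite bform_gram_diag !mulf_eq0 (negbTE q_neq0) /=.
by move=> /eqP/eta_norm_eq0[x0 x1]; rewrite [x]col2_eta x0 x1 -col20.
Qed.

Lemma gram_no_roots_iff q :
  (~ exists x : 'cV[int]_2, bform (gram q) x x = 2 \/ bform (gram q) x x = -2)
    <-> (q != 1 /\ q != -1).
Proof.
split=> [no_root | [q_neq1 q_neqN1] [x root_x]].
  have root_e1 : bform (gram q) (col2 1 0) (col2 1 0) = 2 * q by rewrite bform_gram; ring.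
  by split; apply/eqP => q1; apply: no_root; exists (col2 1 0); rewrite root_e1 q1; [left | right].
have two_neq0 : (2 : int) != 0 by [].
have qN_pm1 : q * eta_norm (x 0 0) (x 1 0) = 1 \/ q * eta_norm (x 0 0) (x 1 0) = -1.
  by case: root_x; rewrite bform_gram_diag -mulrA => E; [left | right];
    apply: (mulfI two_neq0); rewrite E ?mulrN1 ?mulr1.
have /eqP : absz (q * eta_norm (x 0 0) (x 1 0)) = 1%N by case: qN_pm1 => ->.
by rewrite abszM muln_eq1 => /andP[/eqP]; lia.
Qed.

Lemma inN_scale_inv (n a b : int) : n != 0 ->
  inN ((n%:~R)^-1 *: vecQ (col2 a b)) <-> (n %| a)%Z /\ (n %| b)%Z.
Proof.
move=> n_neq0; have nQ_neq0 : (n%:~R : rat) != 0 by rewrite intr_eq0.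
rewrite vecQ_col2 col2Z; split.
- case=> y; rewrite [y]col2_eta vecQ_col2 => /col2_inj[E0 E1].
  by split; apply/dvdzP; [exists (y 0 0) | exists (y 1 0)];
    apply: (@intr_inj rat); rewrite intrM -?E0 -?E1; field.
- case=> /dvdzP[k0 ->] /dvdzP[k1 ->]; exists (col2 k0 k1).
  by rewrite vecQ_col2; congr col2; rewrite intrM; field.
Qed.

Lemma dvdz2_mem q : (q %| 2)%Z = (q \in [:: 1; -1; 2; -2]).
Proof.
apply/idP/idP; last exact: (allP (isT : all (fun d : int => d %| 2)%Z [:: 1; -1; 2; -2])).
rewrite dvdzE => q_dvd2; have le_q2 := @dvdn_leq _ 2 isT q_dvd2.
have q_neq0 : `|q|%N != 0%N by apply: contraTneq q_dvd2 => ->.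
by rewrite !inE; lia.
Qed.

Definition dual_u (q : int) : 'cV[rat]_2 := (q%:~R)^-1 *: e2 rat.
Definition dual_w (q : int) : 'cV[rat]_2 :=
  ((5 * q)%:~R)^-1 *: (e1 rat - 2%:R *: e2 rat).

Section DualLattice.
Variable q : int.
Hypothesis q_neq0 : q != 0.
Let qQ_neq0 : (q%:~R : rat) != 0. Proof. by rewrite intr_eq0. Qed.

Lemma dual_combE (a c : int) :
  a%:~R *: dual_u q + c%:~R *: dual_w q =
  ((5 * q)%:~R)^-1 *: vecQ (col2 c (5 * a - 2 * c)).
Proof.
rewrite /dual_u /dual_w e1E e2E vecQ_col2 !col2Z col2N col2D !col2Z col2D.
by congr col2; rewrite !(intrD, intrN, intrM); field.
Qed.

Lemma in_dual_gramP (v : 'cV[rat]_2) :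
  in_dual (gram q) v <-> exists a c : int, v = a%:~R *: dual_u q + c%:~R *: dual_w q.
Proof.
split=> [v_dual | [a [c ->]] x].
- have [z1 E1] := v_dual (col2 1 0); have [z2 E2] := v_dual (col2 0 1).
  move: E1 E2; rewrite [v]col2_eta !vecQ_col2 !bform_intQ_gram => E1 E2.
  have {}E1 : (z1%:~R : rat) = q%:~R * (2 * v 0 0 + v 1 0) by rewrite -E1; ring.
  have {}E2 : (z2%:~R : rat) = q%:~R * (v 0 0 - 2 * v 1 0) by rewrite -E2; ring.
  exists z1, (2 * z1 + z2); rewrite dual_combE vecQ_col2 col2Z.
  by congr col2; rewrite !(intrD, intrN, intrM) E1 E2; field.
- exists (a * (x 0 0 - 2 * x 1 0) + c * x 1 0).
  rewrite dual_combE vecQ_col2 col2Z [x]col2_eta vecQ_col2 bform_intQ_gram !mxE /=.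
  by rewrite !(intrD, intrN, intrM); field.
Qed.

Lemma inN_dual_comb (a c : int) :
  inN (a%:~R *: dual_u q + c%:~R *: dual_w q) <-> (q %| a)%Z /\ (5 * q %| c)%Z.
Proof.
have q5_neq0 : 5 * q != 0 by rewrite mulf_neq0.
rewrite dual_combE inN_scale_inv // -(@dvdz_mul2l 5 q a) //.
have c2 : (5 * q %| c)%Z -> (5 * q %| 2 * c)%Z by apply: dvdz_mull.
split=> [[qc qac] | [qa qc]]; split=> //.
  by rewrite -(subrK (2 * c) (5 * a)) rpredD ?c2.
by rewrite rpredB ?c2.
Qed.

Lemma discriminant_group_gram :
  [/\ in_dual (gram q) (dual_u q), in_dual (gram q) (dual_w q),
      (forall v, in_dual (gram q) v ->
         exists a c : int, inN (v - (a%:~R *: dual_u q + c%:~R *: dual_w q))) &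
      (forall a c : int,
         inN (a%:~R *: dual_u q + c%:~R *: dual_w q) <-> ((q %| a)%Z /\ (5 * q %| c)%Z))].
Proof.
split; last exact: inN_dual_comb.
- by apply/in_dual_gramP; exists 1, 0; rewrite scale1r scale0r addr0.
- by apply/in_dual_gramP; exists 0, 1; rewrite scale1r scale0r add0r.
- by move=> v /in_dual_gramP[a [c ->]]; exists a, c, 0; rewrite subrr /vecQ map_mx0.
Qed.

Lemma mul_eta_pow6_add_dual_comb (a c : int) :
  mul_eta_pow 6 (a%:~R *: dual_u q + c%:~R *: dual_w q) +
    (a%:~R *: dual_u q + c%:~R *: dual_w q) =
  (q%:~R)^-1 *: vecQ (col2 (8 * a - 2 * c) (14 * a - 4 * c)).
Proof.
rewrite dual_combE !vecQ_col2 !col2Z mul_eta_pow6_col2 col2D.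
by congr col2; rewrite !(intrD, intrN, intrM); field.
Qed.

Lemma mul_eta_pow6_discr_opp_iff :
  (forall v, in_dual (gram q) v -> inN (mul_eta_pow 6 v + v)) <->
  (q \in [:: 1; -1; 2; -2]).
Proof.
rewrite -dvdz2_mem; split=> [eta6_opp | q_dvd2 v /in_dual_gramP[a [c ->]]].
  have /eta6_opp : in_dual (gram q) (1%:~R *: dual_u q + 0%:~R *: dual_w q).
    by apply/in_dual_gramP; exists 1, 0.
  rewrite mul_eta_pow6_add_dual_comb inN_scale_inv // !(mulr1, mulr0, subr0).
  by case=> q8 q14; have -> : 2%Z = gcdz 8 14 by []; rewrite dvdz_gcd q8 q14.
rewrite mul_eta_pow6_add_dual_comb inN_scale_inv //.
have -> : 8 * a - 2 * c = 2 * (4 * a - c) by ring.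
have -> : 14 * a - 4 * c = 2 * (7 * a - 2 * c) by ring.
by split; apply: dvdz_mulr.
Qed.

End DualLattice.

Theorem proposition3p3 :
  (* (1) *)
  (forall G : 'M[int]_2,
      even_hyperbolic G -> is_isometry G (mul_eta_pow 2) ->
      exists q : int, q != 0 /\ G = gram q) /\
  (forall q : int, q != 0 ->
      even_hyperbolic (gram q) /\ is_isometry (gram q) (mul_eta_pow 2)) /\
  (* (2) *)
  (forall q : int, q != 0 ->
     let u : 'cV[rat]_2 := (q%:~R)^-1 *: e2 rat in
     let w : 'cV[rat]_2 := ((5 * q)%:~R)^-1 *: (e1 rat - 2%:R *: e2 rat) in
     [/\ in_dual (gram q) u, in_dual (gram q) w,
         (forall v, in_dual (gram q) v ->
            exists a c : int, inN (v - (a%:~R *: u + c%:~R *: w))) &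
         (forall a c : int,
            inN (a%:~R *: u + c%:~R *: w) <-> ((q %| a)%Z /\ (5 * q %| c)%Z))]) /\
  (* (3) *)
  (forall q : int, q != 0 ->
     (forall x : 'cV[int]_2, x != 0 -> bform (gram q) x x != 0) /\
     ((~ exists x : 'cV[int]_2, bform (gram q) x x = 2 \/ bform (gram q) x x = -2)
        <-> (q != 1 /\ q != -1))) /\
  (* (4) *)
  (forall q : int, q != 0 ->
     ((forall v, in_dual (gram q) v -> inN (mul_eta_pow 6 v + v))
        <-> (q \in [:: 1; -1; 2; -2]))).
Proof.
split; first exact: even_hyperbolic_eta2_isometry_gram.
split; first exact: gram_even_hyperbolic_eta2_isometry.
split; first exact: discriminant_group_gram.
split; first by move=> q q_neq0; split=> [x|]; [exact: gram_anisotropic | exact: gram_no_roots_iff].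
exact: mul_eta_pow6_discr_opp_iff.
Qed.
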